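(* Assume the setting in the context. Let $x_i,x_j,x_k\in X$ be distinct, and assume $x_k$ is neither a parent of $x_i$ nor a parent of $x_j$. If there exist $G_1,G_2\in\mathcal G$, $M\subseteq X\setminus\{x_i,x_j\}$ and $N\subseteq X\setminus\{x_i,x_j,x_k\}$ with $x_i-G_1(M)\perp\!\!\!\perp x_j-G_2(N\cup\{x_k\})$, then there exist $G_1',G_2'\in\mathcal G$, $M'\subseteq X\setminus\{x_i,x_j\}$ and $N'\subseteq X\setminus\{x_i,x_j,x_k\}$ with $x_i-G_1'(M')\perp\!\!\!\perp x_j-G_2'(N')$.
   Context: Model: $X$ is a finite set of observed random variables and $U$ a finite set of unobserved random variables; $V=X\cup U$ and $G=(V,E)$ is a DAG on $V$. Each $v_i\in V$ satisfies $v_i=\sum_{x_j\in \mathrm{pa}(v_i)\cap X} f^{(i)}_j(x_j)+\sum_{u_k\in\mathrm{pa}(v_i)\cap U} f^{(i)}_k(u_k)+n_i$, where the $f$'s are nonlinear functions and the external noises $n_i$ are jointly independent. ''Parent'', ''ancestor'', ''path'', ''d-separation'' refer to $G$ (a path has distinct vertices). Causal Faithfulness Condition (CFC): any conditional independence among variables of $V$ that is not entailed by d-separation in $G$ does not hold. $\perp\!\!\!\perp$ denotes statistical independence, $\not\perp\!\!\!\perp$ dependence. Function class: $\mathcal G$ is a class of generalized additive functions: for $G\in\mathcal G$ and a set $M$ of observed variables, $G(M)=\sum_{x_m\in M} g_m(x_m)$ (with $G(\emptyset)=0$). It satisfies: for any $x_i,x_j\in X$, sets $M,N\subseteq X$,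 $G_1,G_2\in\mathcal G$ and external noise $n_k$, if $n_k\not\perp\!\!\!\perp x_i-G_1(M)$ and $n_k\not\perp\!\!\!\perp x_j-G_2(N)$ then $x_i-G_1(M)\not\perp\!\!\!\perp x_j-G_2(N)$. Definitions, for $X'\subseteq X$ and $x_i,x_j\in X'$: an unobserved causal path (UCP) from $x_i$ to $x_j$ w.r.t. $X'$ is a directed path $x_i\to\cdots\to v_k\to x_j$ in $G$ with $v_k\notin X'$; an unobserved backdoor path (UBP) between $x_i$ and $x_j$ w.r.t. $X'$ is a path $x_i\leftarrow v_k\leftarrow\cdots\leftarrow v\to\cdots\to v_l\to x_j$ with $v_k,v_l\notin X'$ (allowing $v=v_k$, $v=v_l$, or $v=v_k=v_l$; $v$ may be in $X'$). ''UBP/UCP between $x_i$ and $x_j$'' means a UBP or a UCP in either direction. $x_j$ is a visible parent of $x_i$ w.r.t. $X'$ if $x_j$ is a parent of $x_i$ and there is no UBP/UCP between them w.r.t. $X'$; $(x_i,x_j)$ is a visible non-edge w.r.t. $X'$ if there is no edge between them and no UBP/UCP between them w.r.t. $X'$; $(x_i,x_j)$ is invisible w.r.t. $X'$ if there is a UBP/UCP between them w.r.t. $X'$. When $X'$ is omitted, $X'=X$. Standing facts (taken as known), for $X'\subseteq X$ and distinct $x_i,x_j\in X'$: (F1) $x_j$ is a visible parent of $x_i$ w.r.t. $X'$ iff [for all $G_1,G_2\in\mathcal G$, $M\subseteq X'\setminus\{x_i,x_j\}$, $N\subseteq X'\setminus\{x_j\}$: $x_i-G_1(M)\not\perp\!\!\!\perp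 x_j-G_2(N)$] and [there exist $G_1,G_2\in\mathcal G$, $M\subseteq X'\setminus\{x_i\}$, $N\subseteq X'\setminus\{x_i,x_j\}$ with $x_i-G_1(M)\perp\!\!\!\perp x_j-G_2(N)$]. (F2) $(x_i,x_j)$ is a visible non-edge w.r.t. $X'$ iff there exist $G_1,G_2\in\mathcal G$ and $M,N\subseteq X'\setminus\{x_i,x_j\}$ with $x_i-G_1(M)\perp\!\!\!\perp x_j-G_2(N)$. (F3) $(x_i,x_j)$ is invisible w.r.t. $X'$ iff for all $M\subseteq X'\setminus\{x_i\}$, $N\subseteq X'\setminus\{x_j\}$, $G_1,G_2\in\mathcal G$: $x_i-G_1(M)\not\perp\!\!\!\perp x_j-G_2(N)$. *)

From HB Require Import structures.
From mathcomp Require Import all_boot all_order all_algebra.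
From mathcomp Require Import all_classical all_reals all_analysis.

Set Implicit Arguments.
Unset Strict Implicit.
Unset Printing Implicit Defensive.

Import Order.TTheory GRing.Theory Num.Theory.
Local Open Scope classical_set_scope.
Local Open Scope ring_scope.

(* E x y means the edge x -> y (x is a parent of y).                   *)
Section Graph.
Variables (V : finType) (E : rel V).

Definition acyclic : Prop := forall (x : V) (p : seq V), ~ path E x (rcons p x).

Definition UCP (X' : {set V}) (a b : V) : Prop :=
  exists (p : seq V) (vk : V),
    [/\ path E a (p ++ [:: vk; b]), uniq (a :: p ++ [:: vk; b]) & vk \notin X'].

(* Unobserved backdoor path between a and b w.r.t. X':
   a <- vk <- ... <- v -> ... -> vl -> b, where the left branch is the
   directed path v :: rcons p a (so vk = last v p) and the right branch is
   the directed path v :: rcons q b (so vl = last v q); all vertices of the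
   whole path are distinct; vk, vl \notin X' (v = vk, v = vl allowed). *)
Definition UBP (X' : {set V}) (a b : V) : Prop :=
  exists (v : V) (p q : seq V),
    [/\ path E v (rcons p a), path E v (rcons q b),
        uniq (v :: rcons p a ++ rcons q b),
        last v p \notin X' & last v q \notin X'].

Definition UBP_or_UCP (X' : {set V}) (a b : V) : Prop :=
  [\/ UCP X' a b, UCP X' b a, UBP X' a b | UBP X' b a].

Definition visible_parent (X' : {set V}) (a b : V) : Prop :=
  E b a /\ ~ UBP_or_UCP X' a b.

Definition visible_non_edge (X' : {set V}) (a b : V) : Prop :=
  ~~ E a b /\ ~~ E b a /\ ~ UBP_or_UCP X' a b.

Definition invisible (X' : {set V}) (a b : V) : Prop := UBP_or_UCP X' a b.

End Graph.

Section Prob.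
Variables (d : measure_display) (T : measurableType d) (R : realType).
Variable (P : probability T R).

Definition indep (Y Z : T -> R) : Prop :=
  forall A B : set R, measurable A -> measurable B ->
    P (Y @^-1` A `&` Z @^-1` B) = (P (Y @^-1` A) * P (Z @^-1` B))%E.

Definition mutually_indep (V : finType) (n : V -> T -> R) : Prop :=
  forall (S : {set V}) (A : V -> set R), (forall i, measurable (A i)) ->
    P (\bigcap_(i in [set i | i \in S]) (n i @^-1` A i)) =
    (\prod_(i in S) P (n i @^-1` A i))%E.

Variable (V : finType).
Variable (v : V -> T -> R).

(* the generalized additive function G (given by its components g) applied
   to the set M of variables:  G(M) = \sum_{m in M} g_m(v_m) *)
Definition Gapp (g : V -> R -> R) (M : {set V}) : T -> R :=
  fun w => \sum_(m in M) g m (v m w).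

Definition resid (g : V -> R -> R) (M : {set V}) (a : V) : T -> R :=
  fun w => v a w - Gapp g M w.

End Prob.

Definition nonlinear (R : realType) (f : R -> R) : Prop :=
  ~ exists c c0 : R, forall x, f x = c * x + c0.

Definition additive_SEM (d : measure_display) (T : measurableType d)
    (R : realType) (P : probability T R) (V : finType) (E : rel V)
    (v n : V -> T -> R) (f : V -> V -> R -> R) : Prop :=
  [/\ acyclic E,
      (forall i, measurable_fun setT (n i)) /\
      (forall i j, measurable_fun setT (f i j)),
      (forall i j, E j i -> nonlinear (f i j)),
      (forall i w, v i w = \sum_(j | E j i) f i j (v j w) + n i w)
    & mutually_indep P n].

Definition GA_class (d : measure_display) (T : measurableType d)
    (R : realType) (P : probability T R) (V : finType) (X : {set V})
    (v n : V -> T -> R) (cG : set (V -> R -> R)) : Prop :=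
  (forall g, cG g -> forall m, measurable_fun setT (g m)) /\
  (forall (xi xj : V) (M N : {set V}) (g1 g2 : V -> R -> R) (k : V),
      xi \in X -> xj \in X -> M \subset X -> N \subset X ->
      cG g1 -> cG g2 ->
      ~ indep P (n k) (resid v g1 M xi) ->
      ~ indep P (n k) (resid v g2 N xj) ->
      ~ indep P (resid v g1 M xi) (resid v g2 N xj)).

Definition fact_F1 (d : measure_display) (T : measurableType d)
    (R : realType) (P : probability T R) (V : finType) (E : rel V)
    (X : {set V}) (v : V -> T -> R) (cG : set (V -> R -> R)) : Prop :=
  forall (X' : {set V}) (xi xj : V), X' \subset X -> xi \in X' -> xj \in X' ->
    xi != xj ->
    (visible_parent E X' xi xj <->
     (forall (g1 g2 : V -> R -> R) (M N : {set V}), cG g1 -> cG g2 ->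
        M \subset X' :\: [set xi; xj] -> N \subset X' :\ xj ->
        ~ indep P (resid v g1 M xi) (resid v g2 N xj)) /\
     (exists (g1 g2 : V -> R -> R) (M N : {set V}),
        [/\ cG g1, cG g2, M \subset X' :\ xi, N \subset X' :\: [set xi; xj]
          & indep P (resid v g1 M xi) (resid v g2 N xj)])).

Definition fact_F2 (d : measure_display) (T : measurableType d)
    (R : realType) (P : probability T R) (V : finType) (E : rel V)
    (X : {set V}) (v : V -> T -> R) (cG : set (V -> R -> R)) : Prop :=
  forall (X' : {set V}) (xi xj : V), X' \subset X -> xi \in X' -> xj \in X' ->
    xi != xj ->
    (visible_non_edge E X' xi xj <->
     exists (g1 g2 : V -> R -> R) (M N : {set V}),
        [/\ cG g1, cG g2, M \subset X' :\: [set xi; xj],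
            N \subset X' :\: [set xi; xj]
          & indep P (resid v g1 M xi) (resid v g2 N xj)]).

Definition fact_F3 (d : measure_display) (T : measurableType d)
    (R : realType) (P : probability T R) (V : finType) (E : rel V)
    (X : {set V}) (v : V -> T -> R) (cG : set (V -> R -> R)) : Prop :=
  forall (X' : {set V}) (xi xj : V), X' \subset X -> xi \in X' -> xj \in X' ->
    xi != xj ->
    (invisible E X' xi xj <->
     (forall (g1 g2 : V -> R -> R) (M N : {set V}), cG g1 -> cG g2 ->
        M \subset X' :\ xi -> N \subset X' :\ xj ->
        ~ indep P (resid v g1 M xi) (resid v g2 N xj))).

From HB Require Import structures.
From mathcomp Require Import all_boot all_order all_algebra.
From mathcomp Require Import all_classical all_reals all_analysis.
Local Open Scope classical_set_scope.
Local Open Scope ring_scope.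

(* (F2) applied to X shows that (x_i, x_j) is a visible non-edge w.r.t. X.
   Removing x_k, which is a parent of neither endpoint, from the observed set
   creates no new UBP/UCP between them, because the vertices required to be
   unobserved on such a path are parents of x_i or x_j.  So the pair stays a
   visible non-edge w.r.t. X \ {x_k}, and (F2) applied to X \ {x_k} yields
   residuals that avoid x_k. *)

Section UnobservedPaths.
Variables (V : finType) (E : rel V) (X : {set V}) (xk : V).

Lemma notin_setD1_parent (u w : V) :
  ~~ E xk w -> E u w -> u \notin X :\ xk -> u \notin X.
Proof.
move=> nkw euw; rewrite in_setD1 negb_and negbK => /orP [/eqP eu | //].
by rewrite -eu euw in nkw.
Qed.

Lemma UCP_setD1 (a b : V) : ~~ E xk b -> UCP E (X :\ xk) a b -> UCP E X a b.
Proof.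
move=> nkb [p [vk [pth uq nvk]]]; exists p, vk; split=> //.
apply: notin_setD1_parent nkb _ nvk.
by move: pth; rewrite cat_path /= => /and3P [_ _ /andP []].
Qed.

Lemma UBP_setD1 (a b : V) :
  ~~ E xk a -> ~~ E xk b -> UBP E (X :\ xk) a b -> UBP E X a b.
Proof.
move=> nka nkb [w [p [q [pa qb uq np nq]]]]; exists w, p, q; split=> //.
- by apply: notin_setD1_parent nka _ np; move: pa; rewrite rcons_path => /andP [].
- by apply: notin_setD1_parent nkb _ nq; move: qb; rewrite rcons_path => /andP [].
Qed.

Lemma UBP_or_UCP_setD1 (a b : V) :
  ~~ E xk a -> ~~ E xk b -> UBP_or_UCP E (X :\ xk) a b -> UBP_or_UCP E X a b.
Proof.
move=> nka nkb [h | h | h | h].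
- by apply: Or41; apply: UCP_setD1 h.
- by apply: Or42; apply: UCP_setD1 h.
- by apply: Or43; apply: UBP_setD1 h.
- by apply: Or44; apply: UBP_setD1 h.
Qed.

Lemma visible_non_edge_setD1 (a b : V) :
  ~~ E xk a -> ~~ E xk b ->
  visible_non_edge E X a b -> visible_non_edge E (X :\ xk) a b.
Proof.
move=> nka nkb [nab [nba nUX]]; do 2!split=> //.
by move/UBP_or_UCP_setD1 => /(_ nka nkb).
Qed.

End UnobservedPaths.

Arguments visible_non_edge_setD1 {V E} X {xk a b}.

Lemma setD1_setD2 (V : finType) (A : {set V}) (a b c : V) :
  (A :\ c) :\: [set a; b] = A :\: [set a; b; c].
Proof. by apply/setP => x; rewrite !inE; case: (x == a); case: (x == b); case: (x == c). Qed.

Lemma setU1_subset_setD2 (V : finType) (A N : {set V}) (a b c : V) :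
  c \in A -> c != a -> c != b ->
  N \subset A :\: [set a; b; c] -> c |: N \subset A :\: [set a; b].
Proof.
move=> cA ca cb sN.
rewrite finset.subUset finset.sub1set !inE cA (negbTE ca) (negbTE cb) /=.
apply: (fintype.subset_trans sN); apply: finset.setDS.
by apply/fintype.subsetP => x; rewrite !inE => /orP [] ->; rewrite ?orbT.
Qed.

Theorem proposition5 (d : measure_display) (T : measurableType d)
    (R : realType) (P : probability T R)
    (V : finType) (E : rel V) (X : {set V})
    (v n : V -> T -> R) (f : V -> V -> R -> R) (cG : set (V -> R -> R))
    (hSEM : additive_SEM P E v n f)
    (hclass : GA_class P X v n cG)
    (hF1 : fact_F1 P E X v cG) (hF2 : fact_F2 P E X v cG)
    (hF3 : fact_F3 P E X v cG)
    (xi xj xk : V) (hi : xi \in X) (hj : xj \in X) (hk : xk \in X)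
    (hij : xi != xj) (hik : xi != xk) (hjk : xj != xk)
    (hki : ~~ E xk xi) (hkj : ~~ E xk xj) :
  (exists (g1 g2 : V -> R -> R) (M N : {set V}),
     [/\ cG g1, cG g2, M \subset X :\: [set xi; xj],
         N \subset X :\: [set xi; xj; xk]
       & indep P (resid v g1 M xi) (resid v g2 (xk |: N) xj)]) ->
  exists (g1 g2 : V -> R -> R) (M N : {set V}),
     [/\ cG g1, cG g2, M \subset X :\: [set xi; xj],
         N \subset X :\: [set xi; xj; xk]
       & indep P (resid v g1 M xi) (resid v g2 N xj)].
Proof.
case=> g1 [g2 [M [N [cg1 cg2 sM sN indep_kN]]]].
have vne_X : visible_non_edge E X xi xj.
  apply/(hF2 X xi xj (subxx _) hi hj hij); exists g1, g2, M, (xk |: N).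
  by split=> //; apply: setU1_subset_setD2; rewrite // eq_sym.
have iXk : xi \in X :\ xk by rewrite in_setD1 hik.
have jXk : xj \in X :\ xk by rewrite in_setD1 hjk.
have [g1' [g2' [M' [N' [cg1' cg2' sM' sN' indep']]]]] :=
  (hF2 (X :\ xk) xi xj (subD1set _ _) iXk jXk hij).1
    (visible_non_edge_setD1 X hki hkj vne_X).
rewrite setD1_setD2 in sM' sN'.
exists g1', g2', M', N'; split=> //.
by apply: (fintype.subset_trans sM'); apply: finset.setDS; rewrite finset.subsetUl.
Qed.
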